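(* For every $\rho>-1$, the function $C\mapsto F^{\rm bsc}(\rho;C)$ is concave on $[0,1]$. It is non-decreasing in $C$ for $-1<\rho\le0$ and non-increasing in $C$ for $\rho\ge0$.
   Context: Logarithms are base 2. Let $h(p)=-p\log p-(1-p)\log(1-p)$ be the binary entropy function and let $h^{-1}$ be its inverse on $[0,\tfrac12]$. For $C\in[0,1]$ and $\rho>-1$ define $$F^{\rm bsc}(\rho;C)=2^{-\rho}\Bigl(\varepsilon^{1/(1+\rho)}+(1-\varepsilon)^{1/(1+\rho)}\Bigr)^{1+\rho},\qquad \varepsilon=h^{-1}(1-C).$$ *)

From Stdlib Require Import Reals Lra ClassicalEpsilon.
Open Scope R_scope.

Definition log2 (x : R) : R := ln x / ln 2.

Definition xlog2x (x : R) : R := if Req_EM_T x 0 then 0 else x * log2 x.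

Definition h (p : R) : R := - xlog2x p - xlog2x (1 - p).

(* inverse of h on [0,1/2]: the p in [0,1/2] with h p = y (unique for y in [0,1]) *)
Definition hinv (y : R) : R :=
  epsilon (inhabits 0) (fun p => 0 <= p <= 1/2 /\ h p = y).

(* real power with 0^a = 0 (used only with a > 0) *)
Definition rpow (x a : R) : R := if Req_EM_T x 0 then 0 else Rpower x a.

Definition Fbsc (rho C : R) : R :=
  let eps := hinv (1 - C) in
  rpow 2 (- rho) *
  rpow (rpow eps (1 / (1 + rho)) + rpow (1 - eps) (1 / (1 + rho))) (1 + rho).

Definition concave_on_01 (f : R -> R) : Prop :=
  forall x y t, 0 <= x <= 1 -> 0 <= y <= 1 -> 0 <= t <= 1 ->
    t * f x + (1 - t) * f y <= f (t * x + (1 - t) * y).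

(* We parametrise the capacity by the crossover probability: for e in
   [0, 1/2] put C(e) = 1 - h(e) and F(e) = 2^(-rho) (e^a + (1-e)^a)^(1+rho)
   with a = 1/(1+rho), so that F^bsc(rho; C) = F(hinv (1 - C)), and
   e = hinv (1 - C) strictly decreases as C increases.  Writing
   s = ln((1-e)/e) > 0 and b = rho/(1+rho), the Cauchy mean value theorem
   shows that every chord slope of C |-> F^bsc on [0,1] equals, for some
   interior e, the quotient F'(e)/C'(e) = -ln 2 * 2^(-rho) * H(s), where
     H(s) = (1 + exp(-a s))^rho (exp(b s) - 1) / s.
   The heart of the proof is that H is nondecreasing on (0, oo), which
   reduces to elementary inequalities for exp.  Hence chord slopes decrease
   as C grows (concavity), and their sign is that of -(exp(b s) - 1), i.e.
   of -rho (monotonicity). *)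

From Stdlib Require Import Reals Lra ClassicalEpsilon.
From Coquelicot Require Import Coquelicot.
Open Scope R_scope.

Lemma nondecreasing_of_derive (f df : R -> R) (a b : R) : a <= b ->
  (forall x, a <= x <= b -> is_derive f x (df x)) ->
  (forall x, a <= x <= b -> 0 <= df x) -> f a <= f b.
Proof.
  intros Hab Hd Hpos. destruct (Req_dec a b) as [-> | Hne]; [lra|].
  destruct (MVT_cor2 f df a b) as [c [Hc1 Hc2]]; [lra| |].
  - intros c Hc. apply is_derive_Reals, Hd, Hc.
  - assert (0 <= df c) by (apply Hpos; lra). nra.
Qed.

Lemma cauchy_mvt f g f' g' a b : a < b ->
  (forall c, a < c < b -> is_derive f c (f' c)) ->
  (forall c, a < c < b -> is_derive g c (g' c)) ->
  (forall c, a <= c <= b -> continuity_pt f c) ->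
  (forall c, a <= c <= b -> continuity_pt g c) ->
  exists c, a < c < b /\ (g b - g a) * f' c = (f b - f a) * g' c.
Proof.
  intros Hab Hf Hg Cf Cg.
  pose (pf := fun c (P : a < c < b) =>
    exist (fun l => derivable_pt_lim f c l) (f' c) (proj1 (is_derive_Reals _ _ _) (Hf c P))).
  pose (pg := fun c (P : a < c < b) =>
    exist (fun l => derivable_pt_lim g c l) (g' c) (proj1 (is_derive_Reals _ _ _) (Hg c P))).
  destruct (MVT f g a b pf pg Hab Cf Cg) as [c [P Hc]].
  exists c. split; [exact P | exact Hc].
Qed.

Lemma continuity_pt_of_derive f x l : is_derive f x l -> continuity_pt f x.
Proof.
  intros H. apply is_derive_Reals in H.
  exact (derivable_continuous_pt f x (exist _ l H)).
Qed.

Lemma continuity_pt_Rpower f x p : continuity_pt f x -> 0 < f x ->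
  continuity_pt (fun y => Rpower (f y) p) x.
Proof.
  intros Hf Hp. unfold Rpower.
  change (continuity_pt (comp (fun z => exp (p * ln z)) f) x).
  apply continuity_pt_comp; [exact Hf|].
  apply continuity_pt_of_derive with (l := exp (p * ln (f x)) * (p * (1 / f x))).
  auto_derive; [lra | field; lra].
Qed.

(* A function on [0, 1] whose chord slopes decrease from left to right is
   concave: the chord inequality at z = t x + (1 - t) y is Jensen's
   inequality for the pair x, y. *)
Lemma concave_of_chord_slopes (f : R -> R) :
  (forall x z y, 0 <= x -> x < z -> z < y -> y <= 1 ->
     (f y - f z) * (z - x) <= (f z - f x) * (y - z)) ->
  concave_on_01 f.
Proof.
  intros Hslopes.
  assert (Hlt : forall x y t, 0 <= x -> x < y -> y <= 1 -> 0 < t < 1 ->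
            t * f x + (1 - t) * f y <= f (t * x + (1 - t) * y)).
  { intros x y t H1 H2 H3 Ht. set (z := t * x + (1 - t) * y).
    assert (Hxz : x < z) by (unfold z; nra). assert (Hzy : z < y) by (unfold z; nra).
    pose proof (Hslopes x z y H1 Hxz Hzy H3) as Hs.
    replace (z - x) with ((1 - t) * (y - x)) in Hs by (unfold z; ring).
    replace (y - z) with (t * (y - x)) in Hs by (unfold z; ring).
    assert (0 <= (y - x) * (f z - t * f x - (1 - t) * f y)) by nra.
    destruct (Rle_or_lt 0 (f z - t * f x - (1 - t) * f y)); [lra|].
    assert ((y - x) * (f z - t * f x - (1 - t) * f y) < 0) by (apply Rmult_pos_neg; lra).
    lra. }
  intros x y t Hx Hy Ht.
  destruct (Req_dec t 0) as [-> | Ht0].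
  { replace (0 * x + (1 - 0) * y) with y by ring. lra. }
  destruct (Req_dec t 1) as [-> | Ht1].
  { replace (1 * x + (1 - 1) * y) with x by ring. lra. }
  destruct (Rtotal_order x y) as [Hxy | [-> | Hxy]].
  - apply Hlt; lra.
  - replace (t * y + (1 - t) * y) with y by ring. lra.
  - replace (t * x + (1 - t) * y) with ((1 - t) * y + (1 - (1 - t)) * x) by ring.
    pose proof (Hlt y x (1 - t) ltac:(lra) Hxy ltac:(lra) ltac:(lra)). lra.
Qed.

Lemma exp_le_compat x y : x <= y -> exp x <= exp y.
Proof. intros [H | ->]; [left; apply exp_increasing, H | lra]. Qed.

Lemma exp_mul_exp_opp x : exp x * exp (- x) = 1.
Proof. rewrite <- exp_plus, Rplus_opp_r. apply exp_0. Qed.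

Lemma exp_div x y : exp x / exp y = exp (x - y).
Proof. unfold Rminus. rewrite exp_plus, exp_Ropp. reflexivity. Qed.

Lemma ln_nonpos x : x <= 0 -> ln x = 0.
Proof. intros H. unfold ln. destruct (Rlt_dec 0 x) as [Hx | _]; [exfalso; lra | reflexivity]. Qed.

Lemma ln_le_sub1 x : 0 < x -> ln x <= x - 1.
Proof. intros H. pose proof (exp_ineq1_le (ln x)). rewrite exp_ln in H0; lra. Qed.

Lemma ln2_pos : 0 < ln 2.
Proof. pose proof ln_lt_2. lra. Qed.

(* (1 - x) e^x <= 1: the tangent-line bound exp(-x) >= 1 - x, rescaled. *)
Lemma exp_tangent_bound x : 0 <= x * exp x - exp x + 1.
Proof.
  pose proof (exp_ineq1_le (- x)). pose proof (exp_pos x).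
  pose proof (exp_mul_exp_opp x). nra.
Qed.

(* The next order: (x - 2) e^x + x + 2 >= 0 for x >= 0; its derivative is
   the quantity of [exp_tangent_bound]. *)
Lemma exp_second_order_bound x : 0 <= x -> 0 <= x * exp x - 2 * exp x + 2 + x.
Proof.
  intros Hx.
  pose proof (nondecreasing_of_derive (fun x => x * exp x - 2 * exp x + 2 + x)
     (fun x => x * exp x - exp x + 1) 0 x Hx) as H.
  simpl in H. rewrite exp_0 in H. replace (0 * 1 - 2 * 1 + 2 + 0) with 0 in H by ring.
  apply H.
  - intros y _. auto_derive; [exact I | ring].
  - intros y _. apply exp_tangent_bound.
Qed.

Lemma exp_sub_exp_opp_ge t : 0 <= t -> 2 * t <= exp t - exp (- t).
Proof.
  intros Ht.
  pose proof (nondecreasing_of_derive (fun t => exp t - exp (- t) - 2 * t)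
     (fun t => exp t + exp (- t) - 2) 0 t Ht) as H.
  simpl in H. rewrite Ropp_0, exp_0 in H.
  enough (1 - 1 - 2 * 0 <= exp t - exp (- t) - 2 * t) by lra.
  apply H.
  - intros y _. auto_derive; [exact I | ring].
  - intros y _. pose proof (exp_pos y). pose proof (exp_mul_exp_opp y).
    assert (0 <= (exp y - 1) * (exp y - 1) * exp (- y))
      by (apply Rmult_le_pos; [apply Rle_0_sqr | left; apply exp_pos]).
    nra.
Qed.

(** * The slope profile H is nondecreasing *)

(* H(rho; s) = (1 + exp(-a s))^rho (exp(b s) - 1) / s, a = 1/(1+rho),
   b = rho/(1+rho); up to the factor -ln 2 * 2^(-rho) it is dF/dC. *)
Definition Hs (rho s : R) : R :=
  exp (rho * ln (1 + exp (- (1 / (1 + rho) * s)))) * (exp (rho / (1 + rho) * s) - 1) / s.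

(* The numerator of H'(s) once the positive factor
   (1 + exp(-a s))^rho / (s^2 (1 + exp(-a s))) is cleared. *)
Definition Hs_num (a b s : R) : R :=
  - b * exp (- (a * s)) * s * (exp (b * s) - 1)
  + (1 + exp (- (a * s))) * (b * s * exp (b * s) - exp (b * s) + 1).

(* This numerator is nonnegative whenever a > 0 and a + b = 1: for b >= 0 by
   [exp_second_order_bound], for b < 0 by [exp_sub_exp_opp_ge]. *)
Lemma Hs_num_nonneg (a b s : R) : 0 < a -> a + b = 1 -> 0 < s -> 0 <= Hs_num a b s.
Proof.
  intros Ha Hab Hs. unfold Hs_num.
  set (E := exp (- (a * s))). set (X := exp (b * s)).
  pose proof (exp_tangent_bound (b * s)) as HT. fold X in HT.
  assert (HE : 0 < E) by apply exp_pos. assert (HX : 0 < X) by apply exp_pos.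
  destruct (Rle_or_lt 0 b) as [Hb|Hb].
  - assert (HS : 0 <= b * s) by nra.
    pose proof (exp_second_order_bound (b * s) HS) as H2. fold X in H2.
    assert (E <= 1) by (unfold E; rewrite <- exp_0; apply exp_le_compat; nra).
    assert (0 <= (1 - E) * (b * s * X - X + 1)) by nra.
    nra.
  - assert (E <= X) by (unfold E, X; apply exp_le_compat; nra).
    assert (1 + b * s - X <= 0) by (pose proof (exp_ineq1_le (b * s)) as HL; fold X in HL; lra).
    assert (HS : 0 <= - (b * s)) by nra.
    pose proof (exp_sub_exp_opp_ge (- (b * s)) HS) as H3.
    rewrite Ropp_involutive in H3. fold X in H3.
    pose proof (exp_mul_exp_opp (b * s)) as HXinv. fold X in HXinv.
    assert (0 <= 2 * (b * s) * X + 1 - X * X) by nra.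
    assert (0 <= (E - X) * (1 + b * s - X)) by nra.
    nra.
Qed.

Definition Hs_deriv (rho s : R) : R :=
  exp (rho * ln (1 + exp (- (1 / (1 + rho) * s)))) * Hs_num (1 / (1 + rho)) (rho / (1 + rho)) s
  / (s * s * (1 + exp (- (1 / (1 + rho) * s)))).

Lemma Hs_derive rho s : -1 < rho -> 0 < s -> is_derive (Hs rho) s (Hs_deriv rho s).
Proof.
  intros Hr Hs0.
  pose proof (exp_pos (- (1 / (1 + rho) * s))).
  evar (l : R).
  assert (HD : is_derive (Hs rho) s l).
  { unfold Hs. auto_derive; [repeat split; lra | subst l; reflexivity]. }
  replace (Hs_deriv rho s) with l; [exact HD|]. subst l.
  unfold Hs_deriv, Hs_num. field. lra.
Qed.

Lemma Hs_mono rho s1 s2 : -1 < rho -> 0 < s1 <= s2 -> Hs rho s1 <= Hs rho s2.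
Proof.
  intros Hr [H1 H2].
  apply (nondecreasing_of_derive (Hs rho) (Hs_deriv rho) s1 s2 H2).
  - intros s Hs. apply Hs_derive; lra.
  - intros s Hs. unfold Hs_deriv.
    assert (Hnum : 0 <= Hs_num (1 / (1 + rho)) (rho / (1 + rho)) s)
      by (apply Hs_num_nonneg; [apply Rdiv_lt_0_compat | field |]; lra).
    pose proof (exp_pos (rho * ln (1 + exp (- (1 / (1 + rho) * s))))).
    pose proof (exp_pos (- (1 / (1 + rho) * s))).
    apply Rmult_le_pos; [apply Rmult_le_pos; lra|].
    left. apply Rinv_0_lt_compat, Rmult_lt_0_compat; nra.
Qed.

(** * The binary entropy and its inverse *)

Lemma xlnx_continuous_at_0 : continuity_pt (fun y => y * ln y) 0.
Proof.
  intros eps Heps. exists (Rmin 1 ((eps / 2) * (eps / 2))).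
  split; [apply Rmin_pos; nra|].
  intros y [_ Hy]. simpl in *. unfold R_dist in *. rewrite Rminus_0_r in Hy.
  rewrite (ln_nonpos 0), Rmult_0_l, Rminus_0_r by lra.
  assert (Hy1 : Rabs y < 1) by (eapply Rlt_le_trans; [exact Hy | apply Rmin_l]).
  assert (Hy2 : Rabs y < eps / 2 * (eps / 2)) by (eapply Rlt_le_trans; [exact Hy | apply Rmin_r]).
  destruct (Rle_or_lt y 0) as [Hn|Hp].
  { rewrite ln_nonpos, Rmult_0_r, Rabs_R0 by lra. lra. }
  rewrite Rabs_pos_eq in Hy1, Hy2 by lra.
  (* with u = sqrt y: |y ln y| = 2 u (u ln (1/u)) <= 2 u (1 - u) < eps *)
  set (u := sqrt y). assert (Hu : 0 < u) by (apply sqrt_lt_R0; lra).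
  assert (Huu : u * u = y) by (apply sqrt_sqrt; lra).
  assert (Hlnu : ln y = 2 * ln u) by (rewrite <- Huu, ln_mult by lra; ring).
  assert (Hl : ln (/ u) <= / u - 1) by (apply ln_le_sub1, Rinv_0_lt_compat; lra).
  rewrite ln_Rinv in Hl by lra.
  assert (Hlt : ln y < 0) by (rewrite <- ln_1; apply ln_increasing; lra).
  assert (Hue : u < eps / 2) by nra.
  assert (u * / u = 1) by (field; lra).
  rewrite Rabs_left by nra. rewrite Hlnu, <- Huu. nra.
Qed.

Lemma xlnx_continuous x : continuity_pt (fun y => y * ln y) x.
Proof.
  destruct (Rtotal_order x 0) as [Hx|[-> | Hx]].
  - apply (continuity_pt_locally_ext (fun _ => 0) _ (- x) x); [lra| |].
    + intros y Hy. unfold Rdist in Hy. apply Rabs_def2 in Hy.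
      rewrite ln_nonpos by lra. ring.
    + apply continuity_pt_const. intros ? ?. reflexivity.
  - exact xlnx_continuous_at_0.
  - apply continuity_pt_of_derive with (l := ln x + 1).
    auto_derive; [lra | field; lra].
Qed.

Lemma h_eq x : h x = - (x * ln x + (1 - x) * ln (1 - x)) / ln 2.
Proof.
  pose proof ln2_pos.
  assert (E : forall y, xlog2x y = y * ln y / ln 2).
  { intros y. unfold xlog2x, log2. destruct (Req_EM_T y 0) as [->|_]; field; lra. }
  unfold h. rewrite !E. field. lra.
Qed.

Lemma h_continuous : continuity h.
Proof.
  intros x. apply continuity_pt_ext with
    (f := fun x => (- ((x * ln x) + (1 - x) * ln (1 - x))) * / ln 2).
  { intros y. rewrite h_eq. reflexivity. }
  apply continuity_pt_mult; [|apply continuity_pt_const; intros ? ?; reflexivity].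
  apply continuity_pt_opp, continuity_pt_plus; [apply xlnx_continuous|].
  change (continuity_pt (comp (fun y => y * ln y) (fun x => 1 - x)) x).
  apply continuity_pt_comp; [|apply xlnx_continuous].
  apply continuity_pt_minus;
    [apply continuity_pt_const; intros ? ?; reflexivity | apply continuity_pt_id].
Qed.

Lemma h_0 : h 0 = 0.
Proof. rewrite h_eq, Rminus_0_r, ln_1. field. pose proof ln2_pos; lra. Qed.

Lemma h_half : h (1 / 2) = 1.
Proof.
  pose proof ln2_pos. rewrite h_eq. replace (1 - 1 / 2) with (/ 2) by field.
  replace (1 / 2) with (/ 2) by field. rewrite ln_Rinv by lra. field. lra.
Qed.

(* By the intermediate value theorem, hinv really inverts h on [0, 1]. *)
Lemma hinv_spec y : 0 <= y <= 1 -> 0 <= hinv y <= 1 / 2 /\ h (hinv y) = y.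
Proof.
  intros Hy. unfold hinv.
  apply (epsilon_spec (inhabits 0) (fun p => 0 <= p <= 1 / 2 /\ h p = y)).
  destruct (IVT_cor (fun p => h p - y) 0 (1 / 2)) as [z [Hz1 Hz2]].
  - intros x. apply continuity_pt_minus;
      [apply h_continuous | apply continuity_pt_const; intros ? ?; reflexivity].
  - lra.
  - rewrite h_0, h_half. nra.
  - exists z. split; [exact Hz1 | lra].
Qed.

(** * Capacity and F^bsc as functions of the crossover probability *)

Definition llr (e : R) : R := ln (1 - e) - ln e.

Lemma llr_pos e : 0 < e < 1 / 2 -> 0 < llr e.
Proof. intros H. pose proof (ln_increasing e (1 - e)). unfold llr. lra. Qed.

Definition Ce (e : R) : R := 1 - h e.

Lemma Ce_continuous e : continuity_pt Ce e.
Proof.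
  apply continuity_pt_minus;
    [apply continuity_pt_const; intros ? ?; reflexivity | apply h_continuous].
Qed.

Lemma Ce_derive e : 0 < e < 1 -> is_derive Ce e (- llr e / ln 2).
Proof.
  intros He. pose proof ln2_pos. unfold llr.
  apply is_derive_ext with (f := fun e => 1 + (e * ln e + (1 - e) * ln (1 - e)) / ln 2).
  { intros t. unfold Ce. rewrite h_eq.
    change (@eq R (1 + (t * ln t + (1 - t) * ln (1 - t)) / ln 2)
                  (1 - - (t * ln t + (1 - t) * ln (1 - t)) / ln 2)).
    field. lra. }
  auto_derive.
  - repeat split; lra.
  - match goal with |- ?x = ?y => change (@eq R x y) end.
    replace (1 + - e) with (1 - e) by ring.
    change RinvImpl.Rinv with Rinv. field. repeat split; lra.
Qed.

(* x |-> |x|^a, a version of the power which is continuous on all of R. *)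
Definition pw (a x : R) : R := rpow (Rabs x) a.

Lemma pw_continuous_at_0 a : 0 < a -> continuity_pt (pw a) 0.
Proof.
  intros Ha eps Heps. exists (Rpower eps (1 / a)).
  split; [apply exp_pos|].
  intros y [_ Hy]. simpl in *. unfold R_dist in *. rewrite Rminus_0_r in Hy.
  unfold pw, rpow. rewrite Rabs_R0.
  destruct (Req_EM_T 0 0) as [_|]; [|lra].
  destruct (Req_EM_T (Rabs y) 0) as [E|E].
  - rewrite Rminus_0_r, Rabs_R0. lra.
  - rewrite Rminus_0_r, Rabs_pos_eq by (left; apply exp_pos).
    replace eps with (Rpower (Rpower eps (1 / a)) a).
    + apply Rlt_Rpower_l; [lra|]. pose proof (Rabs_pos y). lra.
    + rewrite Rpower_mult. replace (1 / a * a) with 1 by (field; lra). apply Rpower_1; lra.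
Qed.

Lemma pw_continuous a x : 0 < a -> continuity_pt (pw a) x.
Proof.
  intros Ha. destruct (Req_dec x 0) as [-> | Hx]; [apply pw_continuous_at_0, Ha|].
  assert (Hax : 0 < Rabs x) by (apply Rabs_pos_lt, Hx).
  apply (continuity_pt_locally_ext (fun y => Rpower (Rabs y) a) _ (Rabs x) x Hax).
  - intros y Hy. unfold Rdist in Hy. unfold pw, rpow.
    destruct (Req_EM_T (Rabs y) 0) as [E|]; [|reflexivity].
    exfalso. apply Rabs_eq_0 in E. subst y. rewrite Rminus_0_l, Rabs_Ropp in Hy. lra.
  - apply continuity_pt_Rpower; [apply Rcontinuity_abs | exact Hax].
Qed.

Lemma pw_nonneg a x : 0 <= pw a x.
Proof. unfold pw, rpow. destruct (Req_EM_T (Rabs x) 0); [lra | left; apply exp_pos]. Qed.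

Lemma pw_pos a x : x <> 0 -> 0 < pw a x.
Proof.
  intros H. unfold pw, rpow. destruct (Req_EM_T (Rabs x) 0) as [E|_]; [|apply exp_pos].
  exfalso. apply H, Rabs_eq_0, E.
Qed.

Definition Fm (rho e : R) : R :=
  Rpower 2 (- rho) * Rpower (pw (1 / (1 + rho)) e + pw (1 / (1 + rho)) (1 - e)) (1 + rho).

Lemma Fm_continuous rho e : -1 < rho -> e < 1 -> continuity_pt (Fm rho) e.
Proof.
  intros Hr He. assert (Ha : 0 < 1 / (1 + rho)) by (apply Rdiv_lt_0_compat; lra).
  apply continuity_pt_mult; [apply continuity_pt_const; intros ? ?; reflexivity|].
  apply continuity_pt_Rpower.
  - apply continuity_pt_plus; [apply pw_continuous, Ha|].
    change (continuity_pt (comp (pw (1 / (1 + rho))) (fun x => 1 - x)) e).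
    apply continuity_pt_comp; [|apply pw_continuous, Ha].
    apply continuity_pt_minus;
      [apply continuity_pt_const; intros ? ?; reflexivity | apply continuity_pt_id].
  - pose proof (pw_nonneg (1 / (1 + rho)) e). pose proof (pw_pos (1 / (1 + rho)) (1 - e)). lra.
Qed.

Lemma Fm_interior rho y : 0 < y < 1 ->
  Fm rho y = Rpower 2 (- rho) * exp ((1 + rho) *
     ln (exp (1 / (1 + rho) * ln y) + exp (1 / (1 + rho) * ln (1 - y)))).
Proof.
  intros Hy. unfold Fm, pw, rpow.
  rewrite (Rabs_pos_eq y), (Rabs_pos_eq (1 - y)) by lra.
  destruct (Req_EM_T y 0); [lra|]. destruct (Req_EM_T (1 - y) 0); [lra|].
  reflexivity.
Qed.

(* The exp/ln identity behind F'(e): with e = exp L1, 1 - e = exp L2,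
   (1+rho) a = 1 and a + b = 1, the chain-rule derivative of
   exp((1+rho) ln(e^a + (1-e)^a)) equals (1 + exp(-a s))^rho (exp(b s) - 1)
   for s = L2 - L1. *)
Lemma power_mean_derive_identity (rho a b L1 L2 : R) : (1 + rho) * a = 1 -> a + b = 1 ->
  (1 + rho) * (a * (exp (a * L1) / exp L1) - a * (exp (a * L2) / exp L2))
    / (exp (a * L1) + exp (a * L2)) * exp ((1 + rho) * ln (exp (a * L1) + exp (a * L2)))
  = exp (rho * ln (1 + exp (- (a * (L2 - L1))))) * (exp (b * (L2 - L1)) - 1).
Proof.
  intros Hra1 Hab.
  assert (Hra : rho * a = b) by lra.
  set (s := L2 - L1). set (E1 := exp (a * L1)). set (E2 := exp (a * L2)).
  set (Z := exp (- (a * s))). set (W := exp (b * L2)). set (V := exp (b * s)).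
  set (P := exp (rho * ln (1 + Z))).
  assert (HE1 : 0 < E1) by apply exp_pos. assert (HE2 : 0 < E2) by apply exp_pos.
  assert (HZ : 0 < Z) by apply exp_pos. assert (HW : 0 < W) by apply exp_pos.
  assert (hE1 : E1 = E2 * Z) by (unfold E1, E2, Z; rewrite <- exp_plus; f_equal; unfold s; ring).
  assert (hq1 : E1 / exp L1 = V / W).
  { unfold E1, V, W. rewrite !exp_div. f_equal. unfold s.
    replace a with (1 - b) by lra. ring. }
  assert (hq2 : E2 / exp L2 = / W).
  { unfold E2, W. rewrite exp_div, <- exp_Ropp. f_equal. replace a with (1 - b) by lra. ring. }
  assert (hS : exp ((1 + rho) * ln (E1 + E2)) = (E1 + E2) * W * P).
  { assert (hl : ln (E1 + E2) = a * L2 + ln (1 + Z)).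
    { replace (E1 + E2) with (E2 * (1 + Z)) by (rewrite hE1; ring).
      rewrite ln_mult by lra. unfold E2. rewrite ln_exp. reflexivity. }
    replace ((1 + rho) * ln (E1 + E2)) with (ln (E1 + E2) + (b * L2 + rho * ln (1 + Z)))
      by (rewrite hl, <- Hra; ring).
    rewrite exp_plus, exp_ln, exp_plus by lra. unfold W, P. ring. }
  rewrite hq1, hq2, hS.
  transitivity (((1 + rho) * a) * P * (V - 1)); [field; lra | rewrite Hra1; ring].
Qed.

Lemma Fm_derive rho e : -1 < rho -> 0 < e < 1 / 2 ->
  is_derive (Fm rho) e (Rpower 2 (- rho) * llr e * Hs rho (llr e)).
Proof.
  intros Hr He.
  apply is_derive_ext_loc with (f := fun y => Rpower 2 (- rho) *
    exp ((1 + rho) * ln (exp (1 / (1 + rho) * ln y) + exp (1 / (1 + rho) * ln (1 - y))))).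
  { apply (locally_interval _ e 0 1); [simpl; lra | simpl; lra |].
    intros y Hy0 Hy1. symmetry. apply Fm_interior. simpl in *. lra. }
  pose proof (exp_pos (1 / (1 + rho) * ln e)). pose proof (exp_pos (1 / (1 + rho) * ln (1 - e))).
  evar (l : R).
  assert (HD : is_derive (fun y => Rpower 2 (- rho) *
    exp ((1 + rho) * ln (exp (1 / (1 + rho) * ln y) + exp (1 / (1 + rho) * ln (1 - y))))) e l).
  { auto_derive; replace (1 + - e) with (1 - e) by ring.
    - repeat split; lra.
    - subst l. reflexivity. }
  replace (Rpower 2 (- rho) * llr e * Hs rho (llr e)) with l; [exact HD|]. subst l.
  transitivity (Rpower 2 (- rho) *
    (exp (rho * ln (1 + exp (- (1 / (1 + rho) * llr e)))) * (exp (rho / (1 + rho) * llr e) - 1)));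
    [| pose proof (llr_pos e He); unfold Hs; field; lra].
  unfold llr.
  rewrite <- (power_mean_derive_identity rho (1 / (1 + rho)) (rho / (1 + rho)) (ln e) (ln (1 - e)))
    by (field; lra).
  rewrite !exp_ln by lra.
  field. repeat split; lra.
Qed.

(** * Chord slopes of C |-> F^bsc *)

(* dF/dC at crossover probability e, i.e. F'(e) / C'(e). *)
Definition slope (rho e : R) : R := - ln 2 * Rpower 2 (- rho) * Hs rho (llr e).

(* Cauchy's mean value theorem for the curve e |-> (C(e), F(e)). *)
Lemma Fm_Ce_chord rho e1 e2 : -1 < rho -> 0 <= e1 < e2 -> e2 <= 1 / 2 ->
  exists c, e1 < c < e2 /\ Fm rho e2 - Fm rho e1 = slope rho c * (Ce e2 - Ce e1).
Proof.
  intros Hr H1 H2.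
  destruct (cauchy_mvt (Fm rho) Ce (fun e => Rpower 2 (- rho) * llr e * Hs rho (llr e))
     (fun e => - llr e / ln 2) e1 e2) as [c [Hc Heq]].
  - lra.
  - intros c Hc. apply Fm_derive; lra.
  - intros c Hc. apply Ce_derive; lra.
  - intros c Hc. apply Fm_continuous; lra.
  - intros c Hc. apply Ce_continuous.
  - exists c. split; [exact Hc|].
    pose proof (llr_pos c ltac:(lra)) as Hllr. pose proof ln2_pos.
    assert (HF : Rpower 2 (- rho) * llr c * Hs rho (llr c) = slope rho c * (- llr c / ln 2))
      by (unfold slope; field; lra).
    rewrite HF in Heq.
    apply (Rmult_eq_reg_r (- llr c / ln 2)).
    + rewrite <- Heq. ring.
    + apply Rmult_integral_contrapositive. split; [lra | apply Rinv_neq_0_compat; lra].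
Qed.

Lemma Ce_decreasing e1 e2 : 0 <= e1 < e2 -> e2 <= 1 / 2 -> Ce e2 < Ce e1.
Proof.
  intros H1 H2.
  destruct (cauchy_mvt Ce (fun x => x) (fun e => - llr e / ln 2) (fun _ => 1) e1 e2)
    as [c [Hc Heq]].
  - lra.
  - intros c Hc. apply Ce_derive; lra.
  - intros c Hc. auto_derive; auto.
  - intros c Hc. apply Ce_continuous.
  - intros c Hc. apply continuity_pt_id.
  - pose proof (llr_pos c ltac:(lra)). pose proof ln2_pos.
    assert (- llr c / ln 2 < 0)
      by (unfold Rdiv; apply Rmult_neg_pos; [lra | apply Rinv_0_lt_compat; lra]).
    nra.
Qed.

(* The slope increases with e (as H increases and llr decreases). *)
Lemma slope_mono rho c1 c2 : -1 < rho -> 0 < c1 <= c2 -> c2 < 1 / 2 ->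
  slope rho c1 <= slope rho c2.
Proof.
  intros Hr H1 H2. unfold slope.
  pose proof (llr_pos c2 ltac:(lra)).
  assert (llr c2 <= llr c1).
  { unfold llr. assert (ln c1 <= ln c2) by (apply ln_le; lra).
    assert (ln (1 - c2) <= ln (1 - c1)) by (apply ln_le; lra). lra. }
  pose proof (Hs_mono rho (llr c2) (llr c1) Hr ltac:(lra)).
  pose proof ln2_pos. assert (0 < Rpower 2 (- rho)) by apply exp_pos.
  assert (0 < ln 2 * Rpower 2 (- rho)) by (apply Rmult_lt_0_compat; lra).
  nra.
Qed.

Lemma slope_sign rho c : -1 < rho -> 0 < c < 1 / 2 ->
  (rho <= 0 -> 0 <= slope rho c) /\ (0 <= rho -> slope rho c <= 0).
Proof.
  intros Hr Hc. pose proof (llr_pos c Hc) as Hs0.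
  unfold slope, Hs. set (s := llr c) in *.
  set (P := exp (rho * ln (1 + exp (- (1 / (1 + rho) * s))))).
  assert (HP : 0 < P) by apply exp_pos.
  pose proof ln2_pos. assert (0 < Rpower 2 (- rho)) by apply exp_pos.
  replace (- ln 2 * Rpower 2 (- rho) * (P * (exp (rho / (1 + rho) * s) - 1) / s))
    with (- (ln 2 * Rpower 2 (- rho) * P * / s) * (exp (rho / (1 + rho) * s) - 1))
    by (unfold Rdiv; ring).
  assert (0 < ln 2 * Rpower 2 (- rho) * P * / s)
    by (repeat apply Rmult_lt_0_compat; try apply Rinv_0_lt_compat; lra).
  assert (Hb : 0 < / (1 + rho)) by (apply Rinv_0_lt_compat; lra).
  split; intros Hrho.
  - assert (rho / (1 + rho) <= 0) by (unfold Rdiv; nra).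
    assert (exp (rho / (1 + rho) * s) <= exp 0) by (apply exp_le_compat; nra).
    rewrite exp_0 in *. nra.
  - assert (0 <= rho / (1 + rho)) by (unfold Rdiv; nra).
    assert (exp 0 <= exp (rho / (1 + rho) * s)) by (apply exp_le_compat; nra).
    rewrite exp_0 in *. nra.
Qed.

Definition eps_of (C : R) : R := hinv (1 - C).

Lemma eps_of_spec C : 0 <= C <= 1 -> 0 <= eps_of C <= 1 / 2 /\ Ce (eps_of C) = C.
Proof.
  intros H. destruct (hinv_spec (1 - C)) as [H1 H2]; [lra|].
  split; [exact H1|]. unfold Ce, eps_of. rewrite H2. ring.
Qed.

(* Since C(e) decreases on [0, 1/2], e = eps_of C decreases in C. *)
Lemma eps_of_decreasing C1 C2 : 0 <= C1 -> C1 < C2 -> C2 <= 1 -> eps_of C2 < eps_of C1.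
Proof.
  intros H1 H2 H3.
  destruct (eps_of_spec C1) as [A1 B1]; [lra|]. destruct (eps_of_spec C2) as [A2 B2]; [lra|].
  destruct (Rlt_or_le (eps_of C2) (eps_of C1)) as [H|[H|H]]; [exact H | exfalso..].
  - pose proof (Ce_decreasing (eps_of C1) (eps_of C2) ltac:(lra) ltac:(lra)). lra.
  - rewrite H in B1. lra.
Qed.

Lemma rpow_pos_eq x p : 0 < x -> rpow x p = Rpower x p.
Proof. intros H. unfold rpow. destruct (Req_EM_T x 0); [lra | reflexivity]. Qed.

Lemma Fbsc_eq rho C : 0 <= C <= 1 -> Fbsc rho C = Fm rho (eps_of C).
Proof.
  intros HC. destruct (eps_of_spec C HC) as [He _].
  unfold Fbsc, Fm, pw. fold (eps_of C).
  rewrite (Rabs_pos_eq (eps_of C)), (Rabs_pos_eq (1 - eps_of C)), (rpow_pos_eq 2) by lra.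
  f_equal. apply rpow_pos_eq.
  pose proof (pw_nonneg (1 / (1 + rho)) (eps_of C)).
  pose proof (pw_pos (1 / (1 + rho)) (1 - eps_of C) ltac:(lra)).
  unfold pw in *. rewrite Rabs_pos_eq in * by lra. lra.
Qed.

Lemma Fbsc_chord rho C1 C2 : -1 < rho -> 0 <= C1 -> C1 < C2 -> C2 <= 1 ->
  exists c, eps_of C2 < c < eps_of C1 /\
    Fbsc rho C2 - Fbsc rho C1 = slope rho c * (C2 - C1).
Proof.
  intros Hr H1 H2 H3. rewrite !Fbsc_eq by lra.
  pose proof (eps_of_decreasing C1 C2 H1 H2 H3).
  destruct (eps_of_spec C1) as [A1 B1]; [lra|]. destruct (eps_of_spec C2) as [A2 B2]; [lra|].
  destruct (Fm_Ce_chord rho (eps_of C2) (eps_of C1) Hr ltac:(lra) ltac:(lra)) as [c [Hc E]].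
  exists c. split; [exact Hc|].
  rewrite B1, B2 in E. replace (C2 - C1) with (- (C1 - C2)) by ring. lra.
Qed.

(* Chord slopes of C |-> F^bsc decrease: the slope over [x, z] is attained
   at a larger crossover probability than the slope over [z, y]. *)
Lemma Fbsc_chord_slopes_decrease rho x z y : -1 < rho ->
  0 <= x -> x < z -> z < y -> y <= 1 ->
  (Fbsc rho y - Fbsc rho z) * (z - x) <= (Fbsc rho z - Fbsc rho x) * (y - z).
Proof.
  intros Hr H1 H2 H3 H4.
  destruct (Fbsc_chord rho x z Hr H1 H2 ltac:(lra)) as [c1 [Hc1 E1]].
  destruct (Fbsc_chord rho z y Hr ltac:(lra) H3 H4) as [c2 [Hc2 E2]].
  destruct (eps_of_spec y) as [Ay _]; [lra|]. destruct (eps_of_spec x) as [Ax _]; [lra|].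
  assert (slope rho c2 <= slope rho c1) by (apply slope_mono; lra).
  rewrite E1, E2.
  replace (slope rho c1 * (z - x) * (y - z)) with (slope rho c1 * ((y - z) * (z - x))) by ring.
  replace (slope rho c2 * (y - z) * (z - x)) with (slope rho c2 * ((y - z) * (z - x))) by ring.
  apply Rmult_le_compat_r; [nra | assumption].
Qed.

Lemma Fbsc_monotone rho C1 C2 : -1 < rho -> 0 <= C1 -> C1 <= C2 -> C2 <= 1 ->
  (rho <= 0 -> Fbsc rho C1 <= Fbsc rho C2) /\ (0 <= rho -> Fbsc rho C2 <= Fbsc rho C1).
Proof.
  intros Hr H1 [H2 | <-] H3; [|lra].
  destruct (Fbsc_chord rho C1 C2 Hr H1 H2 H3) as [c [Hc E]].
  destruct (eps_of_spec C1) as [A1 _]; [lra|]. destruct (eps_of_spec C2) as [A2 _]; [lra|].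
  destruct (slope_sign rho c Hr ltac:(lra)) as [Hneg Hpos].
  split; intros Hrho; [specialize (Hneg Hrho) | specialize (Hpos Hrho)]; nra.
Qed.

Theorem lemma1 (rho : R) (hrho : -1 < rho) :
  concave_on_01 (Fbsc rho) /\
  (rho <= 0 -> forall C1 C2, 0 <= C1 -> C1 <= C2 -> C2 <= 1 ->
     Fbsc rho C1 <= Fbsc rho C2) /\
  (0 <= rho -> forall C1 C2, 0 <= C1 -> C1 <= C2 -> C2 <= 1 ->
     Fbsc rho C2 <= Fbsc rho C1).
Proof.
  split; [|split].
  - apply concave_of_chord_slopes. intros x z y. apply Fbsc_chord_slopes_decrease, hrho.
  - intros Hr C1 C2 H1 H2 H3. exact (proj1 (Fbsc_monotone rho C1 C2 hrho H1 H2 H3) Hr).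
  - intros Hr C1 C2 H1 H2 H3. exact (proj2 (Fbsc_monotone rho C1 C2 hrho H1 H2 H3) Hr).
Qed.
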